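(* Let $G$ be an alternating directed acyclic graph on $[n]$ with $G^{un}$ connected, and let $d\ge1$. A subgraph $H\subseteq G$ gives a face $\tilde Q_H$ of $\tilde Q_G$ of codimension $d$ if and only if $H^{un}$ has $d+1$ connected components and $E(H)=E(H_1)\cap\dots\cap E(H_d)$ for some subgraphs $H_1,\dots,H_d\subseteq G$ such that each $\tilde Q_{H_i}$ is a facet of $\tilde Q_G$.
   Context: Conventions: $G$ is a directed acyclic graph with vertex set $[n]$, every edge $(i,j)$ satisfying $i<j$; subgraphs $H\subseteq G$ have $V(H)=[n]$, $E(H)\subseteq E(G)$; $^{un}$ denotes underlying undirected graph. $\tilde Q_G=\mathrm{conv}(\{\mathbf 0\}\cup\{\mathbf e_i-\mathbf e_j:(i,j)\in E(G)\})\subset\mathbb R^n$. $G$ is alternating if there is no vertex $j$ with $(i,j),(j,k)\in E(G)$. A facet is a face of codimension 1. *)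

From HB Require Import structures.
From mathcomp Require Import all_boot all_order all_algebra.
Set Implicit Arguments. Unset Strict Implicit. Unset Printing Implicit Defensive.
Import Order.TTheory GRing.Theory Num.Theory.
Local Open Scope ring_scope.

Notation edges n := {set 'I_n * 'I_n}.

(* every edge (i,j) satisfies i < j (hence G is acyclic) *)
Definition increasing_dag n (G : edges n) : Prop :=
  forall e, e \in G -> (val e.1 < val e.2)%N.

Definition alternating n (G : edges n) : Prop :=
  ~ exists i j k : 'I_n, ((i, j) \in G) /\ ((j, k) \in G).

Definition undir n (G : edges n) : rel 'I_n :=
  fun i j => ((i, j) \in G) || ((j, i) \in G).

Definition un_connected n (G : edges n) : Prop :=
  forall i j : 'I_n, connect (undir G) i j.

Definition n_components n (G : edges n) : nat :=
  #|[set [set j | connect (undir G) i j] | i : 'I_n]|.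

Definition evec (R : realFieldType) n (i : 'I_n) : 'rV[R]_n := delta_mx 0 i.

Definition Qpoints (R : realFieldType) n (G : edges n) : seq 'rV[R]_n :=
  0 :: [seq evec R e.1 - evec R e.2 | e <- enum G].

Definition conv (R : realFieldType) n (S : seq 'rV[R]_n) : 'rV[R]_n -> Prop :=
  fun x => exists w : 'I_(size S) -> R,
    (forall k, 0 <= w k) /\ \sum_k w k = 1 /\ x = \sum_k w k *: S`_k.

Definition Qtilde (R : realFieldType) n (G : edges n) : 'rV[R]_n -> Prop :=
  conv (Qpoints R G).

Definition dotv (R : realFieldType) n (x a : 'rV[R]_n) : R := \sum_i x 0 i * a 0 i.

(* F is a face of P: the intersection of P with a (weakly) supporting hyperplane
   (a = 0 allowed, giving P itself). *)
Definition is_face (R : realFieldType) n (P F : 'rV[R]_n -> Prop) : Prop :=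
  exists (a : 'rV[R]_n) (b : R),
    (forall x, P x -> dotv x a <= b) /\
    (forall x, F x <-> (P x /\ dotv x a = b)).

Definition aff_indep (R : realFieldType) n k (p : 'I_k.+1 -> 'rV[R]_n) : bool :=
  row_free (\matrix_(i < k, j < n) (p (lift ord0 i) 0 j - p ord0 0 j)).

Definition has_dim (R : realFieldType) n (P : 'rV[R]_n -> Prop) (d : nat) : Prop :=
  (exists p : 'I_d.+1 -> 'rV[R]_n, (forall i, P (p i)) /\ aff_indep p) /\
  (forall p : 'I_d.+2 -> 'rV[R]_n, (forall i, P (p i)) -> ~~ aff_indep p).

Definition face_codim (R : realFieldType) n (P F : 'rV[R]_n -> Prop) (c : nat) : Prop :=
  is_face P F /\ exists m, has_dim P (m + c) /\ has_dim F m.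

Definition is_facet (R : realFieldType) n (P F : 'rV[R]_n -> Prop) : Prop :=
  face_codim P F 1.

(* A face of [Q_G] is cut out by a functional [f] with [f <= 0] on [Q_G], which
   contains [0]; reading [f] as a height function on the vertices, it increases along
   the edges of [G].  As [G] is alternating, every [e_i - e_j] is a vertex of [Q_G],
   so the faces are exactly the [Q_H] with [H] the edges along which some such [f] is
   constant.  [Q_H] spans the space of its edge vectors, of dimension [n] minus the
   number of components of [H]; hence a face of codimension [d] is one with [d + 1]
   components, and a facet comes from a two-valued [f], i.e. a directed cut of [G]
   into two connected sides.  Summing heights shows that intersections of facets are
   faces.  Conversely, pick a maximum [v] of [f] and a component other than that of
   [v]: the vertices reachable from it in [G] without entering the [H]-component of
   [v] form one side of such a cut.  Recursing into both sides and lifting their cuts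
   back gives [d] cuts which together separate every edge of [G] not in [H]. *)

From HB Require Import structures.
From mathcomp Require Import all_boot all_order all_algebra zify.
Set Implicit Arguments. Unset Strict Implicit. Unset Printing Implicit Defensive.
Import Order.TTheory GRing.Theory Num.Theory.

Section Connect.
Variable T : finType.

Lemma connect_invariant (e : rel T) (X : pred T) x y :
  (forall z w, X z -> e z w -> X w) -> X x -> connect e x y -> X y.
Proof.
move=> clX Xx /connectP[p ep ->]; elim: p x Xx ep => //= z p IH x Xx /andP[exz pz].
exact: IH (clX _ _ Xx exz) pz.
Qed.

Lemma connect_sub_in (e e' : rel T) (X : pred T) x y :
  (forall z w, X z -> e z w -> X w /\ e' z w) -> X x -> connect e x y -> connect e' x y.
Proof.
move=> clX Xx /connectP[p ep ->]; elim: p x Xx ep => /= [x _ _|z p IH x Xx /andP[exz pz]].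
  exact: connect0.
have [Xz e'xz] := clX _ _ Xx exz.
exact: connect_trans (connect1 e'xz) (IH z Xz pz).
Qed.

End Connect.

Section Cuts.
Variable n : nat.
Implicit Types (G H : edges n) (S A B P U X Y : {set 'I_n}).

Definition adj_in G S : rel 'I_n := fun x y => [&& x \in S, y \in S & undir G x y].
Definition connected_in G S := forall x y, x \in S -> y \in S -> connect (adj_in G S) x y.
Definition comp H x := [set y | connect (undir H) x y].
Definition ncomp_in H S := #|comp H @: S|.
Definition comp_closed H A := forall x y, x \in A -> connect (undir H) x y -> y \in A.
Definition adjacent G X Y := [exists x in X, exists y in Y, undir G x y].
Definition rev_edges G : edges n := [set e | (e.2, e.1) \in G].

Record is_dicut G H S A : Prop := IsDicut {
  dicut_sub : A \subset S;
  dicut_neq0 : A != set0;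
  dicut_compl_neq0 : S :\: A != set0;
  dicut_conn : connected_in G A;
  dicut_compl_conn : connected_in G (S :\: A);
  dicut_closed : comp_closed H A;
  dicut_no_back : forall x y, (x, y) \in G -> x \in S :\: A -> y \notin A }.

Lemma undir_sym G : symmetric (undir G).
Proof. by move=> x y; rewrite /undir orbC. Qed.

Lemma edge_undir G x y : (x, y) \in G -> undir G x y.
Proof. by rewrite /undir => ->. Qed.

Lemma undir_subset G H x y : H \subset G -> undir H x y -> undir G x y.
Proof. by move=> sHG /orP[] e; rewrite /undir (subsetP sHG _ e) ?orbT. Qed.

Lemma adj_in_sym G S : symmetric (adj_in G S).
Proof. by move=> x y; rewrite /adj_in undir_sym; case: (x \in S); case: (y \in S). Qed.

Lemma connect_undirC G x y : connect (undir G) x y = connect (undir G) y x.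
Proof. exact/sym_connect_sym/undir_sym. Qed.

Lemma connect_adj_inC G S x y : connect (adj_in G S) x y = connect (adj_in G S) y x.
Proof. exact/sym_connect_sym/adj_in_sym. Qed.

Lemma connect_adj_in_sub G S S' x y :
  S \subset S' -> connect (adj_in G S) x y -> connect (adj_in G S') x y.
Proof.
move=> sSS'; apply: connect_sub => z w /and3P[zS wS e]; apply: connect1.
by rewrite /adj_in (subsetP sSS' _ zS) (subsetP sSS' _ wS).
Qed.

Lemma adjacentP G X Y :
  reflect (exists x y, [/\ x \in X, y \in Y & undir G x y]) (adjacent G X Y).
Proof.
apply: (iffP existsP) => [[x /andP[xX /existsP[y /andP[yY e]]]]|[x [y [xX yY e]]]].
  by exists x, y.
by exists x; rewrite xX; apply/existsP; exists y; rewrite yY.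
Qed.

Lemma connected_inU G X Y :
  connected_in G X -> connected_in G Y -> adjacent G X Y -> connected_in G (X :|: Y).
Proof.
move=> cX cY /adjacentP[a [b [aX bY ab]]].
have sX : X \subset X :|: Y by apply: subsetUl.
have sY : Y \subset X :|: Y by apply: subsetUr.
have XY x y : x \in X -> y \in Y -> connect (adj_in G (X :|: Y)) x y.
  move=> xX yY; apply: connect_trans (connect_adj_in_sub sX (cX _ _ xX aX)) _.
  apply: connect_trans (connect_adj_in_sub sY (cY _ _ bY yY)).
  by apply: connect1; rewrite /adj_in (subsetP sX _ aX) (subsetP sY _ bY).
move=> x y; rewrite !inE => /orP[xX|xY] /orP[yX|yY].
- exact: connect_adj_in_sub sX (cX _ _ xX yX).
- exact: XY.
- by rewrite connect_adj_inC; apply: XY.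
- exact: connect_adj_in_sub sY (cY _ _ xY yY).
Qed.

Lemma connected_in_adjacentD G S X x y :
  connected_in G S -> X \subset S -> x \in X -> y \in S :\: X -> adjacent G X (S :\: X).
Proof.
move=> cS sXS xX; rewrite inE => /andP[yX yS].
apply: contraNT yX => nadj.
apply: (connect_invariant _ xX (cS _ _ (subsetP sXS _ xX) yS)) => z w zX /and3P[_ wS e] /=.
apply: contraNT nadj => wX; apply/adjacentP; exists z, w.
by rewrite inE wX wS.
Qed.

Lemma comp_eq H x y : (comp H x == comp H y) = connect (undir H) x y.
Proof.
apply/eqP/idP => [e|c].
  have : y \in comp H y by rewrite inE connect0.
  by rewrite -e inE.
apply/setP => z; rewrite !inE; apply/idP/idP => h; last exact: connect_trans c h.
by apply: connect_trans h; rewrite connect_undirC.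
Qed.

Lemma ncomp_in_gt0 H S x : x \in S -> 0 < ncomp_in H S.
Proof. by move=> xS; rewrite card_gt0; apply/set0Pn; exists (comp H x); apply: imset_f. Qed.

Lemma ncomp_inD H S A :
  comp_closed H A -> A \subset S -> ncomp_in H S = ncomp_in H A + ncomp_in H (S :\: A).
Proof.
move=> hA sAS; rewrite /ncomp_in -{1}(setID S A) (setIidPr sAS) imsetU cardsU.
suff -> : comp H @: A :&: comp H @: (S :\: A) = set0 by rewrite cards0 subn0.
apply/setP => c; rewrite !inE; apply/negP => /andP[/imsetP[x xA ->] /imsetP[y yD /eqP]].
by rewrite comp_eq => cxy; move: yD; rewrite inE (hA _ _ xA cxy).
Qed.

Lemma comp_closedD H S A : comp_closed H S -> comp_closed H A -> comp_closed H (S :\: A).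
Proof.
move=> hS hA x y; rewrite !inE => /andP[xA xS] cxy; rewrite (hS _ _ xS cxy) andbT.
by apply: contra xA => yA; apply: hA yA _; rewrite connect_undirC.
Qed.

Lemma comp_closedU H A B : comp_closed H A -> comp_closed H B -> comp_closed H (A :|: B).
Proof.
move=> hA hB x y; rewrite !inE => /orP[xA|xB] cxy; first by rewrite (hA _ _ xA cxy).
by rewrite (hB _ _ xB cxy) orbT.
Qed.

(* Add the other side [S :\: P] to whichever of [U], [P :\: U] keeps the union
   connected and the cut directed. *)
Lemma dicut_extend G H S P U :
  connected_in G S -> comp_closed H S -> is_dicut G H S P -> is_dicut G H P U ->
  exists U', is_dicut G H S U' /\ {in P, U' =i U}.
Proof.
move=> cS hS [sPS P0 B0 cP cB hP bP] [sUP U0 V0 cU cV hU bU].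
have sUS := subset_trans sUP sPS.
have /set0Pn[a aP] := P0; have /set0Pn[b bB] := B0.
have /adjacentP[x [y [xP yB exy]]] := connected_in_adjacentD cS sPS aP bB.
have eV : S :\: U = (P :\: U) :|: (S :\: P).
  apply/setP => z; rewrite !inE.
  case: (boolP (z \in U)) => [/(subsetP sUP) -> //|_].
  by case: (boolP (z \in P)) => [/(subsetP sPS) ->|].
case: (boolP (adjacent G (P :\: U) (S :\: P))) => adjVB.
  exists U; split=> //; split; rewrite ?eV //.
  - by rewrite setU_eq0 negb_and V0.
  - exact: connected_inU.
  - move=> z w e; rewrite inE => /orP[zV|zB]; first exact: bU e zV.
    by apply: contra (bP _ _ e zB); apply: (subsetP sUP).
have eU' : S :\: (U :|: (S :\: P)) = P :\: U.
  apply/setP => z; rewrite !inE.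
  by case: (boolP (z \in P)) => [/(subsetP sPS) ->|]; case: (z \in U); case: (z \in S).
exists (U :|: (S :\: P)); split; last by move=> z zP; rewrite !inE zP /= orbF.
split; rewrite ?eU' //.
- by rewrite subUset sUS subsetDl.
- by rewrite setU_eq0 negb_and U0.
- apply: connected_inU => //; apply/adjacentP; exists x, y; split=> //.
  by apply: contraR adjVB => xU; apply/adjacentP; exists x, y; rewrite inE xU xP.
- by apply: comp_closedU => //; apply: comp_closedD.
- move=> z w e zV; rewrite inE negb_or (bU _ _ e zV) /=.
  by apply: contraNN adjVB => wB; apply/adjacentP; exists z, w; rewrite zV wB edge_undir.
Qed.

Lemma undir_rev G : undir (rev_edges G) =2 undir G.
Proof. by move=> x y; rewrite /undir !inE orbC. Qed.

Lemma rev_edgesK : involutive rev_edges.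
Proof. by move=> G; apply/setP => -[x y]; rewrite !inE. Qed.

Lemma connected_in_rev G S : connected_in (rev_edges G) S <-> connected_in G S.
Proof.
have e : adj_in (rev_edges G) S =2 adj_in G S by move=> x y; rewrite /adj_in undir_rev.
by split=> c x y xS yS; [rewrite -(eq_connect e) | rewrite (eq_connect e)]; apply: c.
Qed.

Lemma is_dicut_rev G H S A :
  comp_closed H S -> is_dicut G H S A -> is_dicut (rev_edges G) H S (S :\: A).
Proof.
move=> hS [sAS A0 B0 cA cB hA bA].
have eA : S :\: (S :\: A) = A.
  apply/setP => x; rewrite !inE.
  by case: (boolP (x \in A)) => [/(subsetP sAS) ->|]; case: (x \in S).
split; rewrite ?eA ?subsetDl ?connected_in_rev //; first exact: comp_closedD.
move=> x y; rewrite inE => exy xA; rewrite inE; apply/andP => -[yA yS].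
by have := bA _ _ exy; rewrite inE yA yS xA => /(_ isT).
Qed.

(* Reversing the edges exchanges the two sides of a dicut. *)
Lemma dicut_extend_compl G H S P U :
  connected_in G S -> comp_closed H S -> is_dicut G H S P -> is_dicut G H (S :\: P) U ->
  exists U', is_dicut G H S U' /\ {in S :\: P, U' =i U}.
Proof.
move=> cS hS dP dU.
have hB : comp_closed H (S :\: P) := comp_closedD hS (dicut_closed dP).
have [W [dW agW]] := dicut_extend (proj2 (connected_in_rev _ _) cS) hS
  (is_dicut_rev hS dP) (is_dicut_rev hB dU).
exists (S :\: W); split; first by rewrite -[G]rev_edgesK; apply: is_dicut_rev.
move=> x xB; move: (xB); rewrite inE => /andP[_ xS].
by rewrite inE xS andbT agW // in_setD xB andbT negbK.
Qed.

End Cuts.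

Record is_potential (R : numDomainType) n (G H : edges n) (f : 'I_n -> R) : Prop :=
  IsPotential {
    potential_mono : forall x y, (x, y) \in G -> (f x <= f y)%R;
    potential_eq : forall x y, (x, y) \in G -> (x, y) \in H <-> f x = f y }.

Section DicutAtMax.
Variables (R : realDomainType) (n : nat) (G H : edges n) (f : 'I_n -> R).
Hypotheses (hHG : H \subset G) (hf : is_potential G H f).

Lemma potential_connect x y : connect (undir H) x y -> f x = f y.
Proof.
move=> cxy; apply/esym/eqP; apply: (connect_invariant (X := fun z => f z == f x)) cxy => //=.
by move=> z w /eqP <- /orP[] e; rewrite (potential_eq hf (subsetP hHG _ e)).1.
Qed.

Variables (S : {set 'I_n}) (v u : 'I_n).
Hypotheses (hS : comp_closed H S) (cS : connected_in G S).
Hypotheses (vS : v \in S) (vmax : forall w, w \in S -> (f w <= f v)%R).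
Hypotheses (uS : u \in S) (uv : ~~ connect (undir H) v u).

Local Notation T := (S :\: comp H v).
Local Notation P := [set y | connect (adj_in G T) u y].

Let notT w : w \in S -> w \notin T -> connect (undir H) v w.
Proof. by move=> wS; rewrite !inE wS andbT negbK. Qed.

Let P_subT : P \subset T.
Proof.
apply/subsetP => y; rewrite inE.
apply: (connect_invariant (X := fun z => z \in T)) => [z w _ /and3P[]//|].
by rewrite !inE uS uv.
Qed.

Let P_adj z w : z \in P -> w \in T -> undir G z w -> w \in P.
Proof.
move=> zP wT e; move: (zP); rewrite !inE => cz; apply: connect_trans cz (connect1 _).
by rewrite /adj_in (subsetP P_subT _ zP) wT e.
Qed.

Let P_subS : P \subset S.
Proof. by apply/subsetP => y /(subsetP P_subT); rewrite inE => /andP[]. Qed.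

Let vP : v \notin P.
Proof. by apply: contraT; rewrite negbK => /(subsetP P_subT); rewrite !inE connect0. Qed.

Let P_conn : connected_in G P.
Proof.
move=> x y xP yP; have cxy : connect (adj_in G T) x y.
  by move: xP yP; rewrite !inE connect_adj_inC => cx; apply: connect_trans cx.
apply: (connect_sub_in (X := fun z => z \in P)) cxy => // z w zP /and3P[_ wT e].
by have wP := P_adj zP wT e; rewrite /adj_in zP wP.
Qed.

Let compl_comp_v a : connect (undir H) v a -> connect (adj_in G (S :\: P)) v a.
Proof.
apply: (connect_sub_in (X := connect (undir H) v)) => // z w cz e.
have cw := connect_trans cz (connect1 e).
have inB b : connect (undir H) v b -> b \in S :\: P.
  move=> cb; rewrite inE (hS vS cb) andbT; apply: contraL cb => /(subsetP P_subT).
  by rewrite !inE => /andP[].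
by split=> //; rewrite /adj_in inB // inB // (undir_subset hHG e).
Qed.

Let compl_conn : connected_in G (S :\: P).
Proof.
suff key x : x \in S :\: P -> connect (adj_in G (S :\: P)) v x.
  by move=> x y xB yB; apply: connect_trans (key _ yB); rewrite connect_adj_inC key.
rewrite inE => /andP[xP xS].
suff : (x \in P) || connect (adj_in G (S :\: P)) v x by rewrite (negbTE xP).
apply: (connect_invariant
  (X := fun z => (z \in P) || connect (adj_in G (S :\: P)) v z) _ _ (cS vS xS)).
  2: by rewrite connect0 orbT.
move=> z w /orP[zP|cz] /and3P[zS wS e]; case: (boolP (w \in P)) => //= wP.
  case: (boolP (w \in T)) => wT; first by rewrite (P_adj zP wT e) in wP.
  exact: compl_comp_v (notT wS wT).
have zB : z \in S :\: P.
  apply: (connect_invariant (X := fun z => z \in S :\: P)) cz => [a b _ /and3P[]//|].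
  by rewrite inE vP.
by apply: connect_trans cz (connect1 _); rewrite /adj_in zB inE wP wS e.
Qed.

Let P_closed : comp_closed H P.
Proof.
move=> x y xP; apply: connect_invariant xP => z w zP e.
have wS : w \in S := hS (subsetP P_subS _ zP) (connect1 e).
case: (boolP (w \in T)) => wT; first exact: P_adj zP wT (undir_subset hHG e).
have := subsetP P_subT _ zP; rewrite inE inE (connect_trans (notT wS wT)) //.
by apply: connect1; rewrite undir_sym.
Qed.

(* An edge entering [P] from outside would start in the component of the maximum [v],
   so its head has height [f v] too and the edge lies in [H]. *)
Let P_no_back x y : (x, y) \in G -> x \in S :\: P -> y \notin P.
Proof.
move=> e /setDP[xS xP]; apply: contra xP => yP.
case: (boolP (x \in T)) => xT; first by rewrite (P_adj yP xT) // undir_sym edge_undir.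
have cx := notT xS xT.
have yS := subsetP P_subS _ yP.
have fxy : f x = f y.
  apply/eqP; rewrite eq_le (potential_mono hf e) /= -(potential_connect cx).
  exact: vmax.
have cy := connect_trans cx (connect1 (edge_undir ((potential_eq hf e).2 fxy))).
by have := subsetP P_subT _ yP; rewrite !inE cy.
Qed.

Lemma dicut_at_max : is_dicut G H S P.
Proof.
split; [exact: P_subS | | | exact: P_conn | exact: compl_conn | exact: P_closed |].
- by apply/set0Pn; exists u; rewrite inE connect0.
- by apply/set0Pn; exists v; rewrite inE vP.
- exact: P_no_back.
Qed.

End DicutAtMax.

Lemma in_seq_choice (T : finType) (L : seq T) (Q : T -> T -> Prop) :
  {in L, forall U, exists U', Q U U'} -> exists g : T -> T, {in L, forall U, Q U (g U)}.
Proof.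
move=> hQ; apply: (@fin_all_exists _ (fun=> T) (fun U U' => U \in L -> Q U U')) => U.
by case: (boolP (U \in L)) => [/hQ[U' ?]|UL]; [exists U' | exists U => UL'; case/negP: UL].
Qed.

Definition separates n (G H : edges n) (S : {set 'I_n}) (L : seq {set 'I_n}) :=
  forall x y, (x, y) \in G -> x \in S -> y \in S -> (x, y) \notin H ->
  exists2 A, A \in L & (x \in A) != (y \in A).

Section Dicuts.
Variables (R : realDomainType) (n : nat) (G H : edges n) (f : 'I_n -> R).
Hypotheses (hHG : H \subset G) (hf : is_potential G H f).

Lemma dicut_exists S : comp_closed H S -> connected_in G S -> 1 < ncomp_in H S ->
  exists P, is_dicut G H S P.
Proof.
move=> hS cS ncS.
have [v0 v0S] : exists v0, v0 \in S.
  by apply/set0Pn; apply: contraTneq ncS => ->; rewrite /ncomp_in imset0 cards0.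
case: (arg_maxP f v0S) => v vS vmax.
suff [u uS uv] : exists2 u, u \in S & ~~ connect (undir H) v u.
  by eexists; apply: (dicut_at_max hHG hf hS cS vS vmax uS uv).
apply/exists_inP; apply: contraTT ncS; rewrite negb_exists_in -leqNgt => /forall_inP cv.
apply/card_le1_eqP => _ _ /imsetP[x xS ->] /imsetP[y yS ->]; apply/eqP.
rewrite comp_eq; apply: connect_trans _ (negbNE (cv _ xS)).
by rewrite connect_undirC; apply/negbNE/cv.
Qed.

Lemma dicuts_exist S : S != set0 -> comp_closed H S -> connected_in G S ->
  exists L, [/\ size L = (ncomp_in H S).-1, {in L, forall A, is_dicut G H S A}
                & separates G H S L].
Proof.
have [k] := ubnP #|S|; elim: k S => // k IH S ltSk S0 hS cS.
have /set0Pn[x0 x0S] := S0.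
case: (leqP (ncomp_in H S) 1) => ncS.
  exists [::]; split => //; first by move: (ncomp_in_gt0 H x0S) ncS; case: ncomp_in => [|[]].
  move=> x y e xS yS; case/negP; apply/(potential_eq hf e)/(potential_connect hHG hf).
  by rewrite -comp_eq; apply/eqP; move/card_le1_eqP: ncS; apply; apply: imset_f.
have [P dP] := dicut_exists hS cS ncS.
have [sPS P0 B0 cP cB hP _] := dP.
have /set0Pn[a aP] := P0; have /set0Pn[b bB] := B0.
have ltP : #|P| < #|S|.
  apply: proper_card; rewrite properE sPS; apply/subsetPn.
  by exists b; move: bB; rewrite inE => /andP[].
have ltB : #|S :\: P| < #|S|.
  apply: proper_card; rewrite properE subsetDl; apply/subsetPn.
  by exists a; rewrite ?inE ?aP ?(subsetP sPS).
have [LA [sLA dLA sepA]] := IH P (leq_trans ltP ltSk) P0 hP cP.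
have [LB [sLB dLB sepB]] := IH _ (leq_trans ltB ltSk) B0 (comp_closedD hS hP) cB.
have [gA hgA] := in_seq_choice (fun U UL => dicut_extend cS hS dP (dLA U UL)).
have [gB hgB] := in_seq_choice (fun U UL => dicut_extend_compl cS hS dP (dLB U UL)).
exists (P :: map gA LA ++ map gB LB); split.
- rewrite /= size_cat !size_map sLA sLB (ncomp_inD hP sPS).
  by move: (ncomp_in_gt0 H aP) (ncomp_in_gt0 H bB); lia.
- move=> A; rewrite in_cons mem_cat => /orP[/eqP -> //|/orP[]] /mapP[U UL ->].
    exact: (hgA U UL).1.
  exact: (hgB U UL).1.
- move=> x y e xS yS nH.
  case: (boolP (x \in P)) => xP; case: (boolP (y \in P)) => yP;
    try by exists P; [rewrite mem_head | move: xP yP; case: (x \in P); case: (y \in P)].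
  + have [U UL sU] := sepA _ _ e xP yP nH.
    exists (gA U); first by rewrite in_cons mem_cat (map_f _ UL) orbT.
    by have [_ agU] := hgA U UL; rewrite !agU.
  + have xB : x \in S :\: P by rewrite inE xP xS.
    have yB : y \in S :\: P by rewrite inE yP yS.
    have [U UL sU] := sepB _ _ e xB yB nH.
    exists (gB U); first by rewrite in_cons mem_cat (map_f _ UL) !orbT.
    by have [_ agU] := hgB U UL; rewrite !agU.
Qed.

End Dicuts.

Section Polytope.
Local Open Scope ring_scope.
Variables (R : realFieldType) (n : nat).
Implicit Types (G H : edges n) (S : seq 'rV[R]_n) (a x y : 'rV[R]_n).
Local Notation ev := (evec R (n:=n)).

Lemma evecE i k : ev i 0 k = (i == k)%:R.
Proof. by rewrite /evec mxE eqxx /= eq_sym. Qed.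

Lemma dotv_suml m (w : 'I_m -> R) (y : 'I_m -> 'rV[R]_n) a :
  dotv (\sum_k w k *: y k) a = \sum_k w k * dotv (y k) a.
Proof.
rewrite /dotv; under eq_bigr do rewrite summxE; under eq_bigr do under eq_bigr do rewrite mxE.
under [RHS]eq_bigr do rewrite mulr_sumr.
rewrite exchange_big /=; apply: eq_bigr => k _; rewrite mulr_suml.
by apply: eq_bigr => i _; rewrite mulrA.
Qed.

Lemma dotvBl x y a : dotv (x - y) a = dotv x a - dotv y a.
Proof. by rewrite /dotv -sumrB; apply: eq_bigr => i _; rewrite !mxE mulrBl. Qed.

Lemma dot0v a : dotv 0 a = 0.
Proof. by rewrite /dotv big1 // => i _; rewrite mxE mul0r. Qed.

Lemma dot_evec i a : dotv (ev i) a = a 0 i.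
Proof.
rewrite /dotv (bigD1 i) //= evecE eqxx mul1r big1 ?addr0 // => k ki.
by rewrite evecE eq_sym (negbTE ki) mul0r.
Qed.

Lemma dot_edge_vec i j a : dotv (ev i - ev j) a = a 0 i - a 0 j.
Proof. by rewrite dotvBl !dot_evec. Qed.

Lemma conv_mem S y : y \in S -> conv S y.
Proof.
move=> yS; pose k := Ordinal (etrans (index_mem y S) yS).
exists (fun t => (t == k)%:R); split; first by move=> t; rewrite ler0n.
split; first by rewrite (bigD1 k) //= eqxx big1 ?addr0 // => t /negbTE ->.
rewrite (bigD1 k) //= eqxx scale1r big1 ?addr0 ?nth_index // => t /negbTE ->.
by rewrite scale0r.
Qed.

Lemma conv_convex S m (w : 'I_m -> R) (y : 'I_m -> 'rV[R]_n) :
  (forall t, 0 <= w t) -> \sum_t w t = 1 -> (forall t, conv S (y t)) ->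
  conv S (\sum_t w t *: y t).
Proof.
move=> w0 w1 /fin_all_exists[v hv].
exists (fun l => \sum_t w t * v t l); split.
  by move=> l; apply: sumr_ge0 => t _; apply: mulr_ge0 => //; case: (hv t).
split.
  rewrite exchange_big /= -w1; apply: eq_bigr => t _.
  by rewrite -mulr_sumr; case: (hv t) => _ [-> _]; rewrite mulr1.
under [RHS]eq_bigr do rewrite scaler_suml.
rewrite exchange_big /=; apply: eq_bigr => t _.
by case: (hv t) => _ [_ ->]; rewrite scaler_sumr; apply: eq_bigr => l _; rewrite scalerA.
Qed.

Lemma conv_dot_le S x a b : (forall y, y \in S -> dotv y a <= b) -> conv S x -> dotv x a <= b.
Proof.
move=> hS [w [w0 [w1 ->]]]; rewrite dotv_suml -[b]mul1r -w1 mulr_suml.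
by apply: ler_sum => k _; apply: ler_wpM2l => //; apply/hS/mem_nth.
Qed.

Lemma Qpoints_mem G y :
  y \in Qpoints R G = (y == 0) || [exists e in G, y == ev e.1 - ev e.2].
Proof.
rewrite /Qpoints in_cons; congr (_ || _).
apply/mapP/existsP => [[e eG ->]|[e /andP[eG /eqP ->]]]; exists e; rewrite ?mem_enum //.
by rewrite -mem_enum eG /=.
Qed.

Lemma Qtilde0 G : Qtilde G (0 : 'rV[R]_n).
Proof. by apply: conv_mem; rewrite Qpoints_mem eqxx. Qed.

Lemma Qtilde_edge G i j : (i, j) \in G -> Qtilde G (ev i - ev j).
Proof.
move=> e; apply: conv_mem; rewrite Qpoints_mem; apply/orP; right.
by apply/existsP; exists (i, j); rewrite e /=.
Qed.

Lemma Qtilde_subset G H x : H \subset G -> Qtilde H x -> Qtilde G x.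
Proof.
move=> sHG [w [w0 [w1 ->]]]; apply: conv_convex => // t; apply: conv_mem.
have := mem_nth 0 (ltn_ord t); rewrite !Qpoints_mem => /orP[->//|/existsP[e /andP[eH ye]]].
by apply/orP; right; apply/existsP; exists e; rewrite (subsetP sHG _ eH).
Qed.

(* The functional [e_i - e_j] takes value [2] at [e_i - e_j] but, [G] being
   alternating, at most [1] at every other point of [Q_G]. *)
Lemma Qtilde_edge_inv G H i j : increasing_dag G -> alternating G -> H \subset G ->
  (i, j) \in G -> Qtilde H (ev i - ev j) -> (i, j) \in H.
Proof.
move=> hdag halt sHG eG hx; apply: contraT => eH.
have ij : i != j by apply: contraTneq (hdag _ eG) => ->; rewrite ltnn.
have dE k l : dotv (ev k - ev l) (ev i - ev j) =
    (k == i)%:R - (k == j)%:R - ((l == i)%:R - (l == j)%:R).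
  by rewrite dot_edge_vec !mxE !eqxx.
have le1 y : y \in Qpoints R H -> dotv y (ev i - ev j) <= 1.
  rewrite Qpoints_mem => /orP[/eqP ->|/existsP[[k l] /andP[klH /eqP ->]]].
    by rewrite dot0v ler01.
  have klG := subsetP sHG _ klH.
  have kj : (k == j) = false.
    by apply/negP => /eqP kj; apply: halt; exists i, j, l; split; last rewrite -kj.
  have li : (l == i) = false.
    by apply/negP => /eqP li; apply: halt; exists k, i, j; split; first rewrite -li.
  rewrite /= dE kj li subr0 sub0r opprK.
  case: (boolP (k == i)) => [/eqP ki|_]; case: (boolP (l == j)) => [/eqP lj|_];
    rewrite ?addr0 ?add0r ?lexx ?ler01 //.
  by move: eH; rewrite -ki -lj klH.
have := conv_dot_le le1 hx.
by rewrite dE !eqxx (negbTE ij) eq_sym (negbTE ij) subr0 sub0r opprK -natrD lern1.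
Qed.

End Polytope.

Section FacePotential.
Local Open Scope ring_scope.
Variables (R : realFieldType) (n : nat) (G H : edges n).
Hypothesis hHG : H \subset G.
Local Notation ev := (evec R (n:=n)).

Lemma face_potential : increasing_dag G -> alternating G ->
  is_face (Qtilde (R:=R) G) (Qtilde (R:=R) H) -> exists f : 'I_n -> R, is_potential G H f.
Proof.
move=> hdag halt [a [b [hle hiff]]].
have b0 : b = 0 by have [_] := (hiff 0).1 (Qtilde0 _ _); rewrite dot0v.
exists (fun x => a 0 x); split=> x y e /=.
  by rewrite -subr_le0 -dot_edge_vec -b0; apply/hle/Qtilde_edge.
split=> [eH|fxy].
  by have [_ /eqP] := (hiff _).1 (Qtilde_edge R eH); rewrite dot_edge_vec b0 subr_eq0 => /eqP.
apply: (Qtilde_edge_inv hdag halt hHG e ((hiff _).2 _)).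
by rewrite dot_edge_vec fxy subrr b0; split=> //; apply: Qtilde_edge e.
Qed.

Variable f : 'I_n -> R.
Hypothesis hf : is_potential G H f.
Local Notation a := (\row_j f j).

Let dot_edge i j : dotv (ev i - ev j) a = f i - f j.
Proof. by rewrite dot_edge_vec !mxE. Qed.

Let Qpoints_dot_le0 y : y \in Qpoints R G -> dotv y a <= 0.
Proof.
rewrite Qpoints_mem => /orP[/eqP ->|/existsP[[x z] /andP[e /eqP ->]]]; first by rewrite dot0v.
by rewrite dot_edge subr_le0 (potential_mono hf).
Qed.

Let Qpoints_dot_eq0 y : y \in Qpoints R G -> dotv y a = 0 -> Qtilde H y.
Proof.
rewrite Qpoints_mem => /orP[/eqP ->|/existsP[[x z] /andP[e /eqP ->]]].
  by move=> _; apply: Qtilde0.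
by rewrite dot_edge => /eqP; rewrite subr_eq0 => /eqP/(potential_eq hf e)/Qtilde_edge.
Qed.

Lemma potential_face : is_face (Qtilde (R:=R) G) (Qtilde (R:=R) H).
Proof.
exists a, 0; split=> [x|x]; first exact: conv_dot_le.
split=> [hx|[[w [w0 [w1 ->]]] d0]].
  split; first exact: Qtilde_subset hx.
  case: hx => w [w0 [w1 ->]]; rewrite dotv_suml big1 // => t _.
  have := mem_nth 0 (ltn_ord t).
  rewrite Qpoints_mem => /orP[/eqP ->|/existsP[[i j] /andP[e /eqP ->]]].
    by rewrite dot0v mulr0.
  by rewrite dot_edge (potential_eq hf (subsetP hHG _ e)).1 // subrr mulr0.
rewrite dotv_suml in d0.
have wt0 t : w t * dotv (Qpoints R G)`_t a = 0.
  apply/eqP; rewrite -oppr_eq0; apply/eqP; move: t (isT : true).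
  apply/psumr_eq0P; last by rewrite sumrN d0 oppr0.
  by move=> t _; rewrite oppr_ge0 mulr_ge0_le0 // Qpoints_dot_le0 // mem_nth.
have -> : \sum_t w t *: (Qpoints R G)`_t =
    \sum_t w t *: (if w t == 0 then 0 else (Qpoints R G)`_t).
  by apply: eq_bigr => t _; case: eqP => [->|//]; rewrite !scale0r.
apply: conv_convex => // t; case: eqP => wt; first exact: Qtilde0.
apply: Qpoints_dot_eq0; first exact: mem_nth.
by have /eqP := wt0 t; rewrite mulf_eq0 => /orP[/eqP|/eqP].
Qed.

End FacePotential.

Section EdgeRank.
Local Open Scope ring_scope.
Variables (R : realFieldType) (n : nat) (H : edges n).
Local Notation ev := (evec R (n:=n)).

Definition comp_of (a : 'I_(n_components H)) : {set 'I_n} :=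
  enum_val (A := [set comp H i | i : 'I_n]) a.

Lemma comp_of_inj : injective comp_of.
Proof. exact: enum_val_inj. Qed.

Lemma comp_ofP j : exists a, comp_of a = comp H j.
Proof.
have Cj : comp H j \in [set comp H i | i : 'I_n] by apply: imset_f.
by exists (enum_rank_in Cj (comp H j)); rewrite /comp_of enum_rankK_in.
Qed.

Lemma comp_of_rep a : exists i, comp_of a == comp H i.
Proof. by rewrite /comp_of; have /imsetP[i _ ->] := enum_valP a; exists i. Qed.

Lemma mem_comp_of a j : (j \in comp_of a) = (comp_of a == comp H j).
Proof.
by have [i /eqP ->] := comp_of_rep a; rewrite comp_eq inE.
Qed.

Lemma sum_comp_of (w : 'I_(n_components H) -> R) a j : comp_of a = comp H j ->
  \sum_b w b * (j \in comp_of b)%:R = w a.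
Proof.
move=> aj; rewrite (bigD1 a) //= mem_comp_of aj eqxx mulr1 big1 ?addr0 // => b ba.
by rewrite mem_comp_of -aj (inj_eq comp_of_inj) (negbTE ba) mulr0.
Qed.

Definition edge_vecs : seq 'rV[R]_n := [seq ev e.1 - ev e.2 | e <- enum H].
Definition edge_mx : 'M[R]_(size edge_vecs, n) := \matrix_(k < size edge_vecs) edge_vecs`_k.
Definition comp_mx : 'M[R]_(n_components H, n) := \matrix_(a, j) (j \in comp_of a)%:R.

Lemma edge_vecsP (k : 'I_(size edge_vecs)) :
  exists x y, (x, y) \in H /\ edge_vecs`_k = ev x - ev y.
Proof.
have /mapP[[x y] xyH ->] := mem_nth 0 (ltn_ord k).
by exists x, y; rewrite -mem_enum.
Qed.

Lemma edge_vecs_edge x y : (x, y) \in H ->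
  exists k : 'I_(size edge_vecs), edge_vecs`_k = ev x - ev y.
Proof.
move=> e; have ie : (index (x, y) (enum H) < size edge_vecs)%N.
  by rewrite size_map index_mem mem_enum.
exists (Ordinal ie); rewrite /= (nth_map (x, y)) ?nth_index ?mem_enum //.
by rewrite -(size_map (fun e => ev e.1 - ev e.2)).
Qed.

Lemma comp_mx_free : row_free comp_mx.
Proof.
apply: inj_row_free => v /rowP hv; apply/rowP => b.
have [j /eqP bj] := comp_of_rep b.
have := hv j; rewrite !mxE => <-; under eq_bigr do rewrite mxE.
by rewrite (sum_comp_of _ bj).
Qed.

Lemma edge_mx_sub_ker : (edge_mx <= kermx comp_mx^T)%MS.
Proof.
apply/sub_kermxP/matrixP => k a; rewrite !mxE.
have [x [y [e hk]]] := edge_vecsP k.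
have := dot_edge_vec (R := R) x y (\row_j (j \in comp_of a)%:R); rewrite -hk !mxE !mem_comp_of.
have -> : comp H x = comp H y by apply/eqP; rewrite comp_eq connect1 ?edge_undir.
by rewrite subrr => h; rewrite -[in RHS]h; apply: eq_bigr => j _; rewrite !mxE.
Qed.

Lemma ker_edge_mx_const (u : 'rV[R]_n) : u *m edge_mx^T = 0 ->
  forall x y, connect (undir H) x y -> u 0 x = u 0 y.
Proof.
move=> /rowP u0 x y cxy; apply/esym/eqP.
apply: (connect_invariant (X := fun z => u 0 z == u 0 x)) cxy => //= z w /eqP <-.
suff edge_eq i j : (i, j) \in H -> u 0 i = u 0 j by case/orP => /edge_eq ->.
move=> e; have [k hk] := edge_vecs_edge e; apply/eqP; rewrite -subr_eq0.
rewrite -(dot_edge_vec i j u) -hk; apply/eqP; have := u0 k; rewrite !mxE => <-.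
by apply: eq_bigr => l _; rewrite !mxE mulrC.
Qed.

(* The indicator vectors of the components form a basis of the orthogonal
   complement of the edge vectors. *)
Lemma rank_edge_mx : \rank edge_mx = (n - n_components H)%N.
Proof.
have le_rank : (\rank edge_mx <= n - n_components H)%N.
  have := mxrankS edge_mx_sub_ker; rewrite mxrank_ker mxrank_tr.
  by move: comp_mx_free; rewrite /row_free => /eqP ->.
suff : (n - \rank edge_mx <= n_components H)%N by have := rank_leq_col edge_mx; lia.
rewrite -(mxrank_tr edge_mx) -mxrank_ker.
apply: leq_trans (rank_leq_row comp_mx); apply: mxrankS; apply/row_subP => i.
have : row i (kermx edge_mx^T) *m edge_mx^T = 0 by rewrite -row_mul mulmx_ker row0.
move: (row i _) => u /ker_edge_mx_const u_const.
suff -> : u = (\row_a u 0 (xchoose (comp_of_rep a))) *m comp_mx by apply: submxMl.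
apply/rowP => j; have [a aj] := comp_ofP j; rewrite !mxE.
under eq_bigr do rewrite !mxE.
rewrite (sum_comp_of _ aj); apply/u_const; rewrite -comp_eq -aj.
by have /eqP <- := xchooseP (comp_of_rep a).
Qed.

End EdgeRank.

Section Dimension.
Local Open Scope ring_scope.
Variable R : realFieldType.

Lemma row_free_rowsub m p q (g : 'I_p -> 'I_m) (A : 'M[R]_(m, q)) :
  injective g -> row_free A -> row_free (rowsub g A).
Proof.
move=> ginj fA; apply: inj_row_free => v hv.
have /eqP : (v *m rowsub g 1%:M) *m A = 0 by rewrite -mulmxA -rowsubE.
rewrite mulmx_free_eq0 // => /eqP/rowP w0; apply/rowP => i.
have := w0 (g i); rewrite !mxE => <-.
rewrite (bigD1 i) //= !mxE eqxx mulr1n mulr1 big1 ?addr0 // => k ki.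
by rewrite !mxE (inj_eq ginj) (negbTE ki) mulr0n mulr0.
Qed.

Lemma has_dim_uniq n (P : 'rV[R]_n -> Prop) k k' : has_dim P k -> has_dim P k' -> k = k'.
Proof.
wlog lt_kk' : k k' / (k < k')%N.
  by move=> hw hk hk'; case: (ltngtP k k') => [lt|lt|//]; [apply: hw | apply/esym/hw].
move=> [_ upk] [[p [pP pfree]] _]; exfalso.
have le : (k.+2 <= k'.+1)%N by []; have le' : (k.+1 <= k')%N by [].
apply: (negP (upk (fun i => p (widen_ord le i)) (fun i => pP _))).
rewrite /aff_indep; set M := \matrix_(i, j) (p (lift ord0 i) 0 j - p ord0 0 j) in pfree.
have -> : \matrix_(i < k.+1, j < n)
    (p (widen_ord le (lift ord0 i)) 0 j - p (widen_ord le ord0) 0 j)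
    = rowsub (widen_ord le') M.
  by apply/matrixP => i j; rewrite !mxE; congr (p _ 0 j - p _ 0 j); apply: val_inj.
by apply: row_free_rowsub pfree => a b /(congr1 val) /= /val_inj.
Qed.

Variables (n : nat) (H : edges n).

Lemma Qtilde_sub_edge_mx x : Qtilde H x -> (x <= edge_mx R H)%MS.
Proof.
case=> w [_ [_ ->]]; apply: summx_sub => -[[|k] ht] _ /=; apply: scalemx_sub.
  exact: sub0mx.
by have := row_sub (Ordinal (ht : (k < size (edge_vecs R H))%N)) (edge_mx R H); rewrite rowK.
Qed.

(* Affine hull of [Q_H] is the row space of [edge_mx], as [0] lies in [Q_H]. *)
Lemma has_dim_Qtilde : has_dim (Qtilde (R:=R) H) (n - n_components H).
Proof.
rewrite -(rank_edge_mx R H); split.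
  set g := maxrankfun (edge_mx R H).
  pose p i := if unlift ord0 i is Some k then row (g k) (edge_mx R H) else 0.
  exists p; split=> [i|].
    rewrite /p; case: (unlift ord0 i) => [k|]; last exact: Qtilde0.
    by rewrite rowK; apply: conv_mem; rewrite in_cons mem_nth ?orbT.
  rewrite /aff_indep.
  have -> : \matrix_(i, j) (p (lift ord0 i) 0 j - p ord0 0 j) = rowsub g (edge_mx R H).
    by apply/matrixP => i j; rewrite !mxE /p liftK unlift_none !mxE subr0.
  exact: maxrowsub_free.
move=> p pQ; apply/negP; rewrite /aff_indep /row_free => /eqP rk.
set M := \matrix_(i, j) _ in rk.
have : (M <= edge_mx R H)%MS.
  apply/row_subP => i.
  have -> : row i M = p (lift ord0 i) - p ord0 by apply/rowP => j; rewrite !mxE.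
  by rewrite addmx_sub ?eqmx_opp ?Qtilde_sub_edge_mx.
by move/mxrankS; rewrite rk ltnn.
Qed.

End Dimension.

Section Components.
Variable n : nat.
Implicit Types (G H : edges n) (A : {set 'I_n}).

Lemma n_components_le H : n_components H <= n.
Proof. by rewrite -[n in _ <= n]card_ord leq_imset_card. Qed.

Lemma ncomp_in_setT H : ncomp_in H setT = n_components H.
Proof. by apply: eq_card => C; apply/imsetP/imsetP => -[i _ ->]; exists i. Qed.

Lemma n_components_connected G : un_connected G -> 0 < n -> n_components G = 1.
Proof.
move=> hc n0; apply/eqP; rewrite eqn_leq -ncomp_in_setT (ncomp_in_gt0 _ (in_setT (Ordinal n0))).
rewrite andbT; apply/card_le1_eqP => _ _ /imsetP[x _ ->] /imsetP[y _ ->].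
by apply/eqP; rewrite comp_eq.
Qed.

Definition cut_edges G A : edges n := [set e in G | (e.1 \in A) == (e.2 \in A)].

Lemma cut_edges_sub G A : cut_edges G A \subset G.
Proof. by apply/subsetP => e; rewrite inE => /andP[]. Qed.

Lemma cut_edgesC G A : cut_edges G (~: A) = cut_edges G A.
Proof. by apply/setP => e; rewrite !inE; case: (e.1 \in A); case: (e.2 \in A). Qed.

Lemma comp_cut_edges G A i : i \in A -> connected_in G A -> comp (cut_edges G A) i = A.
Proof.
move=> iA cA; apply/setP => j; rewrite inE; apply/idP/idP => [|jA].
  apply: (connect_invariant (X := fun z => z \in A)) iA => z w zA.
  by case/orP => /[!inE] /andP[_ /eqP] /=; rewrite zA; [move=> <- | move=> ->].
apply: connect_sub (cA _ _ iA jA) => z w /and3P[zA wA /orP[] e]; apply: connect1.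
  by rewrite /undir inE e zA wA.
by rewrite /undir !inE e zA wA orbT.
Qed.

Lemma n_components_cut_edges G H A : is_dicut G H setT A -> n_components (cut_edges G A) = 2.
Proof.
move=> [_ A0 B0 cA cB _ _]; rewrite setTD in B0 cB.
have /set0Pn[a aA] := A0; have /set0Pn[b bB] := B0.
have compB i : i \in ~: A -> comp (cut_edges G A) i = ~: A.
  by move=> iB; rewrite -cut_edgesC; apply: comp_cut_edges.
rewrite -ncomp_in_setT /ncomp_in (_ : _ @: _ = [set A; ~: A]).
  by rewrite cards2 (_ : A != ~: A) //; apply/eqP => /setP/(_ a); rewrite inE aA.
apply/setP => C; apply/imsetP/idP => [[i _ ->]|].
  case: (boolP (i \in A)) => iA; first by rewrite comp_cut_edges // !inE eqxx.
  by rewrite compB ?inE ?eqxx ?orbT.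
rewrite !inE => /orP[] /eqP ->; first by exists a; rewrite ?comp_cut_edges.
by exists b; rewrite ?compB.
Qed.

End Components.

Section Facets.
Local Open Scope ring_scope.
Variables (R : realFieldType) (n : nat) (G : edges n).
Hypothesis hconn : un_connected G.

Lemma codim_Qtilde (H : edges n) d : (0 < d)%N ->
  (exists m, has_dim (Qtilde (R:=R) G) (m + d) /\ has_dim (Qtilde (R:=R) H) m) <->
  n_components H = d.+1.
Proof.
move=> d0; have cH := n_components_le H; split=> [[m [dG dH]]|cHd].
  have eG := has_dim_uniq dG (has_dim_Qtilde R G).
  have eH := has_dim_uniq dH (has_dim_Qtilde R H).
  have n0 : (0 < n)%N by move: eG; lia.
  by move: eG; rewrite n_components_connected // eH; lia.
have n0 : (0 < n)%N by lia.
exists (n - d.+1)%N; split; last by rewrite -cHd; apply: has_dim_Qtilde.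
have := has_dim_Qtilde R G; rewrite n_components_connected //.
by rewrite (_ : n - 1 = n - d.+1 + d)%N //; lia.
Qed.

Lemma potential_cut_edges (H : edges n) A : is_dicut G H setT A ->
  is_potential G (cut_edges G A) (fun x => (x \notin A)%:R : R).
Proof.
move=> [_ _ _ _ _ _ no_back]; split=> x y e; rewrite ?inE ?e /=.
  case: (boolP (x \in A)) => xA; case: (boolP (y \in A)) => yA //=; rewrite ?lexx ?ler01 //.
  by have := no_back _ _ e; rewrite !inE xA yA => /(_ isT).
by case: (x \in A); case: (y \in A); split=> // /eqP; rewrite ?oner_eq0 // eq_sym oner_eq0.
Qed.

Lemma dicut_facet (H : edges n) A : is_dicut G H setT A ->
  is_facet (Qtilde (R:=R) G) (Qtilde (R:=R) (cut_edges G A)).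
Proof.
move=> dA; split; first exact: (potential_face (cut_edges_sub G A) (potential_cut_edges dA)).
by apply/codim_Qtilde => //; rewrite (n_components_cut_edges dA).
Qed.

End Facets.

Lemma bigcap_cut_edges n (G H : edges n) d (L : seq {set 'I_n}) :
  H \subset G -> size L = d -> 0 < d -> {in L, forall A, comp_closed H A} ->
  separates G H setT L -> H = \bigcap_(i < d) cut_edges G (nth set0 L i).
Proof.
move=> sHG sL d0 hL sepL; apply/setP => -[x y]; apply/idP/bigcapP => [eH i _|eI].
  have hA : comp_closed H (nth set0 L i) by apply/hL/mem_nth; rewrite sL.
  have cxy : connect (undir H) x y := connect1 (edge_undir eH).
  rewrite inE (subsetP sHG _ eH) /=; apply/eqP; apply/idP/idP => [xA|yA].
    exact: hA xA cxy.
  by apply: hA yA _; rewrite connect_undirC.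
have /[!inE] /andP[eG _] := eI (Ordinal d0) isT.
apply: contraT => eH; have [A AL] := sepL x y eG (in_setT x) (in_setT y) eH.
have iA : index A L < d by rewrite -sL index_mem.
have := eI (Ordinal iA) isT; rewrite inE /= nth_index // => /andP[_ /eqP ->].
by rewrite eqxx.
Qed.

Lemma potential_bigcap (R : numDomainType) n (G : edges n) d (Hs : 'I_d -> edges n)
    (F : 'I_d -> 'I_n -> R) :
  (forall i, is_potential G (Hs i) (F i)) ->
  is_potential G (\bigcap_i Hs i) (fun x => \sum_i F i x)%R.
Proof.
move=> hF; split=> x y e; first by apply: ler_sum => i _; apply: potential_mono (hF i) _ _ e.
split=> [/bigcapP eI | /= eq_sum].
  by apply: eq_bigr => i _; apply/(potential_eq (hF i) e)/eI.
apply/bigcapP => i _; apply/(potential_eq (hF i) e)/eqP; rewrite eq_sym -subr_eq0.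
have ge0 k : (0 <= F k y - F k x)%R by rewrite subr_ge0 (potential_mono (hF k) e).
have sum0 : (\sum_k (F k y - F k x) = 0)%R by rewrite sumrB eq_sum subrr.
by rewrite (psumr_eq0P (fun k _ => ge0 k) sum0).
Qed.

Lemma facet_decomposition (R : realFieldType) n (G H : edges n) (f : 'I_n -> R) d :
  increasing_dag G -> alternating G -> un_connected G -> H \subset G ->
  is_potential G H f -> n_components H = d.+1 -> 0 < d ->
  exists Hs : 'I_d -> edges n,
    (forall i, Hs i \subset G /\ is_facet (Qtilde (R:=R) G) (Qtilde (R:=R) (Hs i))) /\
    H = \bigcap_(i < d) Hs i.
Proof.
move=> hdag halt hconn hHG hf cH d0.
have n0 : 0 < n by have := n_components_le H; rewrite cH; lia.
have T0 : [set: 'I_n] != set0 by apply/set0Pn; exists (Ordinal n0).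
have cT : connected_in G setT.
  move=> x y _ _; apply: connect_sub (hconn x y) => z w e.
  by apply: connect1; rewrite /adj_in !inE.
have [L [sL dL sepL]] := dicuts_exist hHG hf T0 (fun _ _ _ _ => in_setT _) cT.
rewrite ncomp_in_setT cH /= in sL.
have dLi (i : 'I_d) : is_dicut G H setT (nth set0 L i) by apply/dL/mem_nth; rewrite sL.
exists (fun i => cut_edges G (nth set0 L i)); split.
  by move=> i; split; [apply: cut_edges_sub | exact: (dicut_facet R hconn (dLi i))].
by apply: bigcap_cut_edges hHG sL d0 _ sepL => A /dL/dicut_closed.
Qed.

Unset Implicit Arguments.

Theorem mainTheorem14 (R : realFieldType) (n : nat) (G : {set 'I_n * 'I_n})
    (hdag : increasing_dag G) (halt : alternating G) (hconn : un_connected G)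
    (d : nat) (hd : (1 <= d)%N) (H : {set 'I_n * 'I_n}) (hHG : H \subset G) :
  face_codim (Qtilde (R:=R) G) (Qtilde (R:=R) H) d <->
  (n_components H = d.+1 /\
   exists Hs : 'I_d -> {set 'I_n * 'I_n},
     (forall i, Hs i \subset G /\ is_facet (Qtilde (R:=R) G) (Qtilde (R:=R) (Hs i))) /\
     H = \bigcap_(i < d) Hs i).
Proof.
split=> [[hface hdim] | [cH [Hs [hHs eH]]]].
  have cH := (codim_Qtilde R hconn H hd).1 hdim.
  have [f hf] := face_potential hHG hdag halt hface.
  by split=> //; apply: facet_decomposition hdag halt hconn hHG hf cH hd.
split; last exact/(codim_Qtilde R hconn H hd).
have /fin_all_exists[F hF] i : exists f : 'I_n -> R, is_potential G (Hs i) f.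
  by have [sHiG [hface _]] := hHs i; exact: (face_potential sHiG hdag halt hface).
by rewrite eH in hHG *; exact: (potential_face hHG (potential_bigcap hF)).
Qed.
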